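(* Let $\Omega\subset\mathbb{R}^2$ be a domain, and let $p,q$ be real valued functions with $p\in C^2(\Omega)$ and $p>0$. Let $u_0\in C^2(\Omega)$ be a positive solution of $(\operatorname{div}p\operatorname{grad}+q)u=0$ in $\Omega$, and put $f=p^{1/2}u_0$. Let $W=W_1+iW_2\in C^2(\Omega)$ (with $W_1,W_2$ real valued) be a solution of $W_{\bar z}=\frac{f_{\bar z}}{f}\overline{W}$ in $\Omega$. Then: (i) $u=p^{-1/2}W_1$ is a solution of $(\operatorname{div}p\operatorname{grad}+q)u=0$ in $\Omega$; (ii) $v=p^{1/2}W_2$ is a solution of $(\operatorname{div}\frac1p\operatorname{grad}+q_1)v=0$ in $\Omega$, where $$q_1=-\frac1p\left(\frac qp+2\Big\langle\frac{\nabla p}{p},\frac{\nabla u_0}{u_0}\Big\rangle+2\Big(\frac{\nabla u_0}{u_0}\Big)^2\right).$$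
   Context: $\partial_{\bar z}=\frac12(\partial_x+i\partial_y)$. $\langle\cdot,\cdot\rangle$ is the Euclidean inner product in $\mathbb{R}^2$, and $(\nabla h)^2=h_x^2+h_y^2$. $(\operatorname{div}a\operatorname{grad}+b)\varphi=\operatorname{div}(a\nabla\varphi)+b\varphi$. *)

From Stdlib Require Import Reals.
From Coquelicot Require Import Coquelicot.
Open Scope R_scope.

(* functions on R^2 are written curried: f : R -> R -> R, f x y *)
Definition uncurry2 {A : Type} (f : R -> R -> A) : R * R -> A :=
  fun z => f (fst z) (snd z).

Definition dx (f : R -> R -> R) : R -> R -> R := fun x y => Derive (fun t => f t y) x.
Definition dy (f : R -> R -> R) : R -> R -> R := fun x y => Derive (fun t => f x t) y.

Definition is_domain (Om : R -> R -> Prop) : Prop :=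
  (exists x y, Om x y) /\
  open (uncurry2 Om) /\
  (forall U V : R * R -> Prop, open U -> open V ->
     (forall z, uncurry2 Om z -> U z \/ V z) ->
     (forall z, uncurry2 Om z -> U z -> V z -> False) ->
     (forall z, uncurry2 Om z -> ~ U z) \/ (forall z, uncurry2 Om z -> ~ V z)).

Definition C1_on (Om : R -> R -> Prop) (f : R -> R -> R) : Prop :=
  forall x y, Om x y ->
    ex_derive (fun t => f t y) x /\ ex_derive (fun t => f x t) y /\
    continuous (uncurry2 f) (x, y) /\
    continuous (uncurry2 (dx f)) (x, y) /\
    continuous (uncurry2 (dy f)) (x, y).

Definition C2_on (Om : R -> R -> Prop) (f : R -> R -> R) : Prop :=
  C1_on Om f /\ C1_on Om (dx f) /\ C1_on Om (dy f).

Definition divagrad (a b u : R -> R -> R) (x y : R) : R :=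
  dx (fun s t => a s t * dx u s t) x y + dy (fun s t => a s t * dy u s t) x y
  + b x y * u x y.

Definition is_solution (Om : R -> R -> Prop) (a b u : R -> R -> R) : Prop :=
  forall x y, Om x y ->
    ex_derive (fun t => u t y) x /\ ex_derive (fun t => u x t) y /\
    ex_derive (fun t => a t y * dx u t y) x /\
    ex_derive (fun t => a x t * dy u x t) y /\
    divagrad a b u x y = 0.

(* d/d zbar = 1/2 (d_x + i d_y) of a complex-valued function W = Re W + i Im W *)
Definition dbar (W : R -> R -> C) (x y : R) : C :=
  ((dx (fun s t => Re (W s t)) x y - dy (fun s t => Im (W s t)) x y) / 2,
   (dx (fun s t => Im (W s t)) x y + dy (fun s t => Re (W s t)) x y) / 2).

(* Put w1 = W1 / f and w2 = f W2.  Taking real and imaginary parts, the Vekua equation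
   W_zbar = (f_zbar / f) conj W becomes the generalized Cauchy-Riemann system
   f^2 dx w1 = dy w2, f^2 dy w1 = - dx w2, and equality of mixed partials then gives
   div (f^2 grad w1) = 0 and div (f^-2 grad w2) = 0.  Since f^2 = p u0^2, the factorization
   (div a grad + b) (phi w) = phi^-1 div (a phi^2 grad w) + w (div a grad + b) phi
   turns the first equation into (i) with a = p, phi = u0, u = u0 w1, and the second into (ii)
   with a = 1/p, phi = 1/u0, v = w2 / u0, because 1/u0 solves (div p^-1 grad + q1) phi = 0. *)

From Stdlib Require Import Reals Lra.
From Coquelicot Require Import Coquelicot.
Open Scope R_scope.

Definition eq_on (Om : R -> R -> Prop) (F G : R -> R -> R) : Prop :=
  forall x y, Om x y -> F x y = G x y.

(* Unlike C2_on, this needs no continuity bookkeeping: it is stable under products and smooth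
   compositions, the symmetry of mixed partials being propagated algebraically; C2_on implies
   it by Schwarz's theorem. *)
Definition mixed_partials_on (Om : R -> R -> Prop) (g : R -> R -> R) : Prop :=
  forall x y, Om x y ->
    ex_derive (fun t => g t y) x /\ ex_derive (fun t => g x t) y /\
    ex_derive (fun t => dy g t y) x /\ ex_derive (fun t => dx g x t) y /\
    dx (dy g) x y = dy (dx g) x y.

Lemma dx_is (F : R -> R -> R) x y l : is_derive (fun s => F s y) x l -> dx F x y = l.
Proof. apply is_derive_unique. Qed.

Lemma dy_is (F : R -> R -> R) x y l : is_derive (fun t => F x t) y l -> dy F x y = l.
Proof. apply is_derive_unique. Qed.

Lemma is_derive_quotient_add_mult (A B phi w : R -> R) x :
  ex_derive A x -> ex_derive B x -> ex_derive phi x -> ex_derive w x -> phi x <> 0 ->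
  is_derive (fun s => A s / phi s + w s * B s) x
    ((Derive A x * phi x - A x * Derive phi x) / phi x ^ 2 + Derive w x * B x + w x * Derive B x).
Proof.
intros. auto_derive; [repeat split; assumption |].
change (fun t : R => A t) with A; change (fun t : R => B t) with B.
change (fun t : R => phi t) with phi; change (fun t : R => w t) with w.
match goal with |- ?l = ?r => change (@eq R l r) end. field. assumption.
Qed.

Lemma is_derive_opp_div_sqr (P p u : R -> R) x :
  ex_derive P x -> ex_derive p x -> ex_derive u x -> p x <> 0 -> u x <> 0 ->
  is_derive (fun s => - P s / (p s * u s) ^ 2) x
    (- Derive P x / (p x * u x) ^ 2
     + 2 * P x * (Derive p x * u x + p x * Derive u x) / (p x * u x) ^ 3).
Proof.
intros. auto_derive.
- repeat split; try assumption.
  rewrite Rmult_1_r; repeat apply Rmult_integral_contrapositive_currified; assumption.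
- change (fun t : R => P t) with P; change (fun t : R => p t) with p.
  change (fun t : R => u t) with u.
  match goal with |- ?l = ?r => change (@eq R l r) end. field. split; assumption.
Qed.

Definition dual_potential (p q u0 : R -> R -> R) (x y : R) : R :=
  - (/ p x y) *
    (q x y / p x y
     + 2 * (dx p x y / p x y * (dx u0 x y / u0 x y) + dy p x y / p x y * (dy u0 x y / u0 x y))
     + 2 * ((dx u0 x y / u0 x y) ^ 2 + (dy u0 x y / u0 x y) ^ 2)).

Lemma dbar_eq_real_system (f W1 W2 : R -> R -> R) x y :
  f x y <> 0 ->
  ex_derive (fun t => f t y) x -> ex_derive (fun t => f x t) y ->
  ex_derive (fun t => W1 t y) x -> ex_derive (fun t => W1 x t) y ->
  ex_derive (fun t => W2 t y) x -> ex_derive (fun t => W2 x t) y ->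
  dbar (fun s t => (W1 s t, W2 s t)) x y =
    Cmult (Cdiv (dbar (fun s t => RtoC (f s t)) x y) (RtoC (f x y))) (Cconj (W1 x y, W2 x y)) ->
  f x y ^ 2 * dx (fun s t => W1 s t * / f s t) x y = dy (fun s t => f s t * W2 s t) x y /\
  f x y ^ 2 * dy (fun s t => W1 s t * / f s t) x y = - dx (fun s t => f s t * W2 s t) x y.
Proof.
intros f_nz f_x f_y W1_x W1_y W2_x W2_y H.
unfold dbar in H; simpl in H.
assert (dx0 : dx (fun _ _ => 0) x y = 0) by apply (Derive_const 0).
assert (dy0 : dy (fun _ _ => 0) x y = 0) by apply (Derive_const 0).
rewrite dx0, dy0 in H.
injection H; clear H; intros H2 H1.
erewrite (dx_is (fun s t => W1 s t * / f s t)), (dy_is (fun s t => W1 s t * / f s t)),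
  (dx_is (fun s t => f s t * W2 s t)), (dy_is (fun s t => f s t * W2 s t))
  by (auto_derive; [repeat split; assumption | reflexivity]).
unfold Cmult, Cdiv, Cinv, Cconj, RtoC in H1, H2; simpl in H1, H2.
unfold dx, dy in *.
match type of H1 with (?A - ?B) / 2 = ?E => replace A with (B + 2 * E) by lra end.
match type of H2 with (?B + ?A) / 2 = ?E => replace A with (2 * E - B) by lra end.
split; field; exact f_nz.
Qed.

Section OpenSet.

Variable Om : R -> R -> Prop.
Hypothesis Om_open : open (uncurry2 Om).

Lemma locally_2d_on x y : Om x y -> locally_2d Om x y.
Proof. intros Hxy. apply locally_2d_locally, (Om_open (x, y)), Hxy. Qed.

Lemma locally_x_on x y : Om x y -> locally x (fun s => Om s y).
Proof. intros Hxy. apply locally_2d_1d_const_y, locally_2d_on, Hxy. Qed.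

Lemma locally_y_on x y : Om x y -> locally y (fun t => Om x t).
Proof. intros Hxy. apply locally_2d_1d_const_x, locally_2d_on, Hxy. Qed.

Lemma dx_eq_on F G : eq_on Om F G -> eq_on Om (dx F) (dx G).
Proof.
intros H x y Hxy. apply Derive_ext_loc.
apply filter_imp with (2 := locally_x_on x y Hxy). intros s Hs. now apply H.
Qed.

Lemma dy_eq_on F G : eq_on Om F G -> eq_on Om (dy F) (dy G).
Proof.
intros H x y Hxy. apply Derive_ext_loc.
apply filter_imp with (2 := locally_y_on x y Hxy). intros t Ht. now apply H.
Qed.

Lemma ex_derive_x_eq_on F G x y : eq_on Om F G -> Om x y ->
  ex_derive (fun s => F s y) x -> ex_derive (fun s => G s y) x.
Proof.
intros H Hxy. apply ex_derive_ext_loc.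
apply filter_imp with (2 := locally_x_on x y Hxy). intros s Hs. now apply H.
Qed.

Lemma ex_derive_y_eq_on F G x y : eq_on Om F G -> Om x y ->
  ex_derive (fun t => F x t) y -> ex_derive (fun t => G x t) y.
Proof.
intros H Hxy. apply ex_derive_ext_loc.
apply filter_imp with (2 := locally_y_on x y Hxy). intros t Ht. now apply H.
Qed.

Lemma is_solution_eq_on a b u a' b' u' :
  eq_on Om a a' -> eq_on Om b b' -> eq_on Om u u' ->
  is_solution Om a b u -> is_solution Om a' b' u'.
Proof.
intros Ha Hb Hu Hsol x y Hxy.
destruct (Hsol x y Hxy) as (ux & uy & fx & fy & Heq).
assert (Fx : eq_on Om (fun s t => a s t * dx u s t) (fun s t => a' s t * dx u' s t)).
{ intros s t Hst. now rewrite Ha, (dx_eq_on _ _ Hu). }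
assert (Fy : eq_on Om (fun s t => a s t * dy u s t) (fun s t => a' s t * dy u' s t)).
{ intros s t Hst. now rewrite Ha, (dy_eq_on _ _ Hu). }
repeat split.
- exact (ex_derive_x_eq_on _ _ _ _ Hu Hxy ux).
- exact (ex_derive_y_eq_on _ _ _ _ Hu Hxy uy).
- exact (ex_derive_x_eq_on _ _ _ _ Fx Hxy fx).
- exact (ex_derive_y_eq_on _ _ _ _ Fy Hxy fy).
- unfold divagrad in *.
  now rewrite <- (dx_eq_on _ _ Fx), <- (dy_eq_on _ _ Fy), <- Hb, <- Hu.
Qed.

Lemma C2_on_mixed_partials g : C2_on Om g -> mixed_partials_on Om g.
Proof.
intros (H0 & H1 & H2) x y Hxy.
destruct (H0 x y Hxy) as (g_x & g_y & _).
destruct (H1 x y Hxy) as (_ & gx_y & _ & _ & gxy_cont).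
destruct (H2 x y Hxy) as (gy_x & _ & _ & gyx_cont & _).
repeat split; auto.
unfold dx, dy. apply Schwarz.
- apply locally_2d_impl with (2 := locally_2d_on x y Hxy).
  apply locally_2d_forall. intros s t Hst.
  destruct (H0 s t Hst) as (? & ? & _). destruct (H1 s t Hst) as (_ & ? & _).
  destruct (H2 s t Hst) as (? & _). repeat split; auto.
- apply continuity_2d_pt_filterlim. exact gyx_cont.
- apply continuity_2d_pt_filterlim. exact gxy_cont.
Qed.

Lemma dx_mult_on (g h : R -> R -> R) :
  (forall x y, Om x y -> ex_derive (fun t => g t y) x /\ ex_derive (fun t => h t y) x) ->
  eq_on Om (dx (fun s t => g s t * h s t)) (fun s t => dx g s t * h s t + g s t * dx h s t).
Proof.
intros H x y Hxy. destruct (H x y Hxy). now apply (Derive_mult (fun t => g t y) (fun t => h t y)).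
Qed.

Lemma dy_mult_on (g h : R -> R -> R) :
  (forall x y, Om x y -> ex_derive (fun t => g x t) y /\ ex_derive (fun t => h x t) y) ->
  eq_on Om (dy (fun s t => g s t * h s t)) (fun s t => dy g s t * h s t + g s t * dy h s t).
Proof.
intros H x y Hxy. destruct (H x y Hxy). now apply (Derive_mult (fun t => g x t) (fun t => h x t)).
Qed.

Lemma mixed_partials_on_mult (g h : R -> R -> R) :
  mixed_partials_on Om g -> mixed_partials_on Om h ->
  mixed_partials_on Om (fun x y => g x y * h x y).
Proof.
intros Hg Hh.
assert (Dx := dx_mult_on g h (fun x y Hxy =>
  conj (proj1 (Hg x y Hxy)) (proj1 (Hh x y Hxy)))).
assert (Dy := dy_mult_on g h (fun x y Hxy =>
  conj (proj1 (proj2 (Hg x y Hxy))) (proj1 (proj2 (Hh x y Hxy))))).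
intros x y Hxy.
destruct (Hg x y Hxy) as (g_x & g_y & gy_x & gx_y & g_sym).
destruct (Hh x y Hxy) as (h_x & h_y & hy_x & hx_y & h_sym).
repeat split.
- auto_derive; repeat split; assumption.
- auto_derive; repeat split; assumption.
- apply (ex_derive_x_eq_on _ _ _ _ (fun s t H => eq_sym (Dy s t H)) Hxy).
  auto_derive; repeat split; assumption.
- apply (ex_derive_y_eq_on _ _ _ _ (fun s t H => eq_sym (Dx s t H)) Hxy).
  auto_derive; repeat split; assumption.
- rewrite (dx_eq_on _ _ Dy x y Hxy), (dy_eq_on _ _ Dx x y Hxy).
  lazymatch goal with |- dx ?F _ _ = dy ?G _ _ =>
    erewrite (dx_is F), (dy_is G) by (auto_derive; [repeat split; assumption | reflexivity])
  end.
  unfold dx, dy in *. rewrite g_sym, h_sym. ring.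
Qed.

Lemma mixed_partials_on_comp (phi phi' : R -> R) (P : R -> Prop) (g : R -> R -> R) :
  (forall z, P z -> is_derive phi z (phi' z)) ->
  (forall z, P z -> ex_derive phi' z) ->
  (forall x y, Om x y -> P (g x y)) ->
  mixed_partials_on Om g -> mixed_partials_on Om (fun x y => phi (g x y)).
Proof.
intros Hphi Hphi' HP Hg.
assert (phi_ex : forall z, P z -> ex_derive phi z) by (intros z Hz; eexists; apply Hphi, Hz).
assert (Dx : eq_on Om (dx (fun s t => phi (g s t))) (fun s t => phi' (g s t) * dx g s t)).
{ intros s t Hst. destruct (Hg s t Hst) as (g_x & _).
  apply dx_is. rewrite Rmult_comm.
  apply (is_derive_comp phi (fun u => g u t)); [apply Hphi, HP, Hst | apply Derive_correct, g_x]. }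
assert (Dy : eq_on Om (dy (fun s t => phi (g s t))) (fun s t => phi' (g s t) * dy g s t)).
{ intros s t Hst. destruct (Hg s t Hst) as (_ & g_y & _).
  apply dy_is. rewrite Rmult_comm.
  apply (is_derive_comp phi (fun u => g s u)); [apply Hphi, HP, Hst | apply Derive_correct, g_y]. }
intros x y Hxy.
destruct (Hg x y Hxy) as (g_x & g_y & gy_x & gx_y & g_sym).
assert (phi_g := phi_ex _ (HP x y Hxy)). assert (phi'_g := Hphi' _ (HP x y Hxy)).
repeat split.
- auto_derive; repeat split; assumption.
- auto_derive; repeat split; assumption.
- apply (ex_derive_x_eq_on _ _ _ _ (fun s t H => eq_sym (Dy s t H)) Hxy).
  auto_derive; repeat split; assumption.
- apply (ex_derive_y_eq_on _ _ _ _ (fun s t H => eq_sym (Dx s t H)) Hxy).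
  auto_derive; repeat split; assumption.
- rewrite (dx_eq_on _ _ Dy x y Hxy), (dy_eq_on _ _ Dx x y Hxy).
  lazymatch goal with |- dx ?F _ _ = dy ?G _ _ =>
    erewrite (dx_is F), (dy_is G) by (auto_derive; [repeat split; assumption | reflexivity])
  end.
  unfold dx, dy in *. rewrite g_sym. ring.
Qed.

Lemma mixed_partials_on_sqrt g : (forall x y, Om x y -> 0 < g x y) ->
  mixed_partials_on Om g -> mixed_partials_on Om (fun x y => sqrt (g x y)).
Proof.
apply (mixed_partials_on_comp sqrt (fun z => / (2 * sqrt z)) (fun z => 0 < z)).
- intros z Hz. auto_derive; [exact Hz | ring].
- intros z Hz. auto_derive. repeat split; [exact Hz |].
  apply Rmult_integral_contrapositive_currified; [lra | now apply Rgt_not_eq, sqrt_lt_R0].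
Qed.

Lemma mixed_partials_on_inv g : (forall x y, Om x y -> g x y <> 0) ->
  mixed_partials_on Om g -> mixed_partials_on Om (fun x y => / g x y).
Proof.
apply (mixed_partials_on_comp Rinv (fun z => - / z ^ 2) (fun z => z <> 0)).
- intros z Hz. auto_derive; [exact Hz | field; exact Hz].
- intros z Hz. auto_derive. repeat split. rewrite Rmult_1_r. now apply Rmult_integral_contrapositive_currified.
Qed.

Lemma is_solution_of_conjugate (a w v : R -> R -> R) (c : R) :
  (forall x y, Om x y -> ex_derive (fun t => w t y) x /\ ex_derive (fun t => w x t) y) ->
  (forall x y, Om x y -> a x y * dx w x y = c * dy v x y /\ a x y * dy w x y = - (c * dx v x y)) ->
  mixed_partials_on Om v -> is_solution Om a (fun _ _ => 0) w.
Proof.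
intros Hw Hwv Hv.
assert (Fx : eq_on Om (fun s t => a s t * dx w s t) (fun s t => c * dy v s t))
  by (intros s t Hst; apply Hwv, Hst).
assert (Fy : eq_on Om (fun s t => a s t * dy w s t) (fun s t => - (c * dx v s t)))
  by (intros s t Hst; apply Hwv, Hst).
intros x y Hxy.
destruct (Hv x y Hxy) as (_ & _ & vy_x & vx_y & v_sym).
destruct (Hw x y Hxy) as (w_x & w_y).
split; [exact w_x | split; [exact w_y | split; [|split]]].
- apply (ex_derive_x_eq_on _ _ _ _ (fun s t H => eq_sym (Fx s t H)) Hxy).
  auto_derive; repeat split; assumption.
- apply (ex_derive_y_eq_on _ _ _ _ (fun s t H => eq_sym (Fy s t H)) Hxy).
  auto_derive; repeat split; assumption.
- unfold divagrad. rewrite (dx_eq_on _ _ Fx x y Hxy), (dy_eq_on _ _ Fy x y Hxy).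
  erewrite (dx_is (fun s t => c * dy v s t)), (dy_is (fun s t => - (c * dx v s t)))
    by (auto_derive; [repeat split; assumption | reflexivity]).
  unfold dx, dy in *. rewrite v_sym. ring.
Qed.

(* (div a grad + b) (phi w) = phi^-1 div (a phi^2 grad w) + w (div a grad + b) phi. *)
Lemma is_solution_mul (a b phi w : R -> R -> R) :
  (forall x y, Om x y -> phi x y <> 0) ->
  is_solution Om a b phi ->
  is_solution Om (fun x y => a x y * phi x y ^ 2) (fun _ _ => 0) w ->
  is_solution Om a b (fun x y => phi x y * w x y).
Proof.
intros Hphi Sphi Sw.
assert (Fx : eq_on Om (fun s t => a s t * dx (fun x y => phi x y * w x y) s t)
  (fun s t => a s t * phi s t ^ 2 * dx w s t / phi s t + w s t * (a s t * dx phi s t))).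
{ intros s t Hst.
  rewrite (dx_mult_on phi w (fun x y H => conj (proj1 (Sphi x y H)) (proj1 (Sw x y H))) s t Hst).
  field. now apply Hphi. }
assert (Fy : eq_on Om (fun s t => a s t * dy (fun x y => phi x y * w x y) s t)
  (fun s t => a s t * phi s t ^ 2 * dy w s t / phi s t + w s t * (a s t * dy phi s t))).
{ intros s t Hst.
  rewrite (dy_mult_on phi w (fun x y H =>
    conj (proj1 (proj2 (Sphi x y H))) (proj1 (proj2 (Sw x y H)))) s t Hst).
  field. now apply Hphi. }
intros x y Hxy.
assert (phi_nz := Hphi x y Hxy).
destruct (Sphi x y Hxy) as (phi_x & phi_y & Bx & By & Ephi).
destruct (Sw x y Hxy) as (w_x & w_y & Ax & Ay & Ew).
split; [|split; [|split; [|split]]].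
- auto_derive; repeat split; assumption.
- auto_derive; repeat split; assumption.
- apply (ex_derive_x_eq_on _ _ _ _ (fun s t H => eq_sym (Fx s t H)) Hxy).
  eexists. apply (is_derive_quotient_add_mult (fun s => a s y * phi s y ^ 2 * dx w s y)
    (fun s => a s y * dx phi s y) (fun s => phi s y) (fun s => w s y)); assumption.
- apply (ex_derive_y_eq_on _ _ _ _ (fun s t H => eq_sym (Fy s t H)) Hxy).
  eexists. apply (is_derive_quotient_add_mult (fun t => a x t * phi x t ^ 2 * dy w x t)
    (fun t => a x t * dy phi x t) (fun t => phi x t) (fun t => w x t)); assumption.
- unfold divagrad in *.
  rewrite (dx_eq_on _ _ Fx x y Hxy), (dy_eq_on _ _ Fy x y Hxy).
  rewrite (dx_is _ _ _ _ (is_derive_quotient_add_mult (fun s => a s y * phi s y ^ 2 * dx w s y)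
    (fun s => a s y * dx phi s y) (fun s => phi s y) (fun s => w s y) x Ax Bx phi_x w_x phi_nz)).
  rewrite (dy_is _ _ _ _ (is_derive_quotient_add_mult (fun t => a x t * phi x t ^ 2 * dy w x t)
    (fun t => a x t * dy phi x t) (fun t => phi x t) (fun t => w x t) y Ay By phi_y w_y phi_nz)).
  unfold dx, dy in *.
  match type of Ew with ?A + ?B + _ = 0 => replace A with (- B) by lra end.
  match type of Ephi with ?A + ?B + ?C = 0 => replace A with (- B - C) by lra end.
  field. exact phi_nz.
Qed.

(* The formula for q1 is exactly what makes 1/u0 a solution with coefficient 1/p. *)
Lemma is_solution_inv (p q u0 : R -> R -> R) :
  (forall x y, Om x y -> p x y <> 0) -> (forall x y, Om x y -> u0 x y <> 0) ->
  (forall x y, Om x y -> ex_derive (fun t => p t y) x /\ ex_derive (fun t => p x t) y) ->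
  is_solution Om p q u0 ->
  is_solution Om (fun x y => / p x y) (dual_potential p q u0) (fun x y => / u0 x y).
Proof.
intros Hp Hu Dp Su.
assert (Fx : eq_on Om (fun s t => / p s t * dx (fun x y => / u0 x y) s t)
  (fun s t => - (p s t * dx u0 s t) / (p s t * u0 s t) ^ 2)).
{ intros s t Hst. destruct (Su s t Hst) as (u_x & _).
  unfold dx. rewrite (Derive_inv (fun r => u0 r t)) by (assumption || apply Hu, Hst).
  field. split; [apply Hu | apply Hp]; exact Hst. }
assert (Fy : eq_on Om (fun s t => / p s t * dy (fun x y => / u0 x y) s t)
  (fun s t => - (p s t * dy u0 s t) / (p s t * u0 s t) ^ 2)).
{ intros s t Hst. destruct (Su s t Hst) as (_ & u_y & _).
  unfold dy. rewrite (Derive_inv (fun r => u0 s r)) by (assumption || apply Hu, Hst).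
  field. split; [apply Hu | apply Hp]; exact Hst. }
intros x y Hxy.
assert (p_nz := Hp x y Hxy). assert (u_nz := Hu x y Hxy).
destruct (Dp x y Hxy) as (p_x & p_y).
destruct (Su x y Hxy) as (u_x & u_y & Px & Py & Eu).
split; [|split; [|split; [|split]]].
- auto_derive; repeat split; assumption.
- auto_derive; repeat split; assumption.
- apply (ex_derive_x_eq_on _ _ _ _ (fun s t H => eq_sym (Fx s t H)) Hxy).
  eexists. apply (is_derive_opp_div_sqr (fun s => p s y * dx u0 s y)
    (fun s => p s y) (fun s => u0 s y)); assumption.
- apply (ex_derive_y_eq_on _ _ _ _ (fun s t H => eq_sym (Fy s t H)) Hxy).
  eexists. apply (is_derive_opp_div_sqr (fun t => p x t * dy u0 x t)
    (fun t => p x t) (fun t => u0 x t)); assumption.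
- unfold divagrad, dual_potential in *.
  rewrite (dx_eq_on _ _ Fx x y Hxy), (dy_eq_on _ _ Fy x y Hxy).
  rewrite (dx_is _ _ _ _ (is_derive_opp_div_sqr (fun s => p s y * dx u0 s y)
    (fun s => p s y) (fun s => u0 s y) x Px p_x u_x p_nz u_nz)).
  rewrite (dy_is _ _ _ _ (is_derive_opp_div_sqr (fun t => p x t * dy u0 x t)
    (fun t => p x t) (fun t => u0 x t) y Py p_y u_y p_nz u_nz)).
  unfold dx, dy in *.
  match type of Eu with ?A + ?B + ?C = 0 => replace A with (- B - C) by lra end.
  field. split; assumption.
Qed.

Lemma is_solution_vekua_parts (f W1 W2 : R -> R -> R) :
  (forall x y, Om x y -> f x y <> 0) ->
  mixed_partials_on Om f -> mixed_partials_on Om W1 -> mixed_partials_on Om W2 ->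
  (forall x y, Om x y ->
     dbar (fun s t => (W1 s t, W2 s t)) x y =
     Cmult (Cdiv (dbar (fun s t => RtoC (f s t)) x y) (RtoC (f x y))) (Cconj (W1 x y, W2 x y))) ->
  is_solution Om (fun x y => f x y ^ 2) (fun _ _ => 0) (fun x y => W1 x y * / f x y) /\
  is_solution Om (fun x y => / f x y ^ 2) (fun _ _ => 0) (fun x y => f x y * W2 x y).
Proof.
intros f_nz Mf M1 M2 HW.
assert (Mw1 : mixed_partials_on Om (fun x y => W1 x y * / f x y))
  by now apply mixed_partials_on_mult, mixed_partials_on_inv.
assert (Mw2 : mixed_partials_on Om (fun x y => f x y * W2 x y))
  by now apply mixed_partials_on_mult.
assert (Sys : forall x y, Om x y ->
  f x y ^ 2 * dx (fun s t => W1 s t * / f s t) x y = dy (fun s t => f s t * W2 s t) x y /\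
  f x y ^ 2 * dy (fun s t => W1 s t * / f s t) x y = - dx (fun s t => f s t * W2 s t) x y).
{ intros x y Hxy.
  destruct (Mf x y Hxy) as (? & ? & _), (M1 x y Hxy) as (? & ? & _), (M2 x y Hxy) as (? & ? & _).
  apply dbar_eq_real_system; auto. }
split.
- apply (is_solution_of_conjugate _ _ (fun x y => f x y * W2 x y) 1).
  + intros x y Hxy. destruct (Mw1 x y Hxy) as (? & ? & _). now split.
  + intros x y Hxy. rewrite !Rmult_1_l. apply Sys, Hxy.
  + exact Mw2.
- apply (is_solution_of_conjugate _ _ (fun x y => W1 x y * / f x y) (-1)).
  + intros x y Hxy. destruct (Mw2 x y Hxy) as (? & ? & _). now split.
  + intros x y Hxy. destruct (Sys x y Hxy) as (E1 & E2). rewrite <- E1.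
    match type of E2 with ?L = - ?D => replace D with (- L) by lra end.
    split; field; exact (f_nz x y Hxy).
  + exact Mw1.
Qed.

End OpenSet.

Theorem mainTheorem7 (Om : R -> R -> Prop) (p q u0 : R -> R -> R) (W : R -> R -> C) :
  is_domain Om ->
  C2_on Om p ->
  (forall x y, Om x y -> 0 < p x y) ->
  C2_on Om u0 ->
  (forall x y, Om x y -> 0 < u0 x y) ->
  is_solution Om p q u0 ->
  C2_on Om (fun x y => Re (W x y)) ->
  C2_on Om (fun x y => Im (W x y)) ->
  (let f := fun x y => sqrt (p x y) * u0 x y in
   forall x y, Om x y ->
     dbar W x y =
     Cmult (Cdiv (dbar (fun s t => RtoC (f s t)) x y) (RtoC (f x y))) (Cconj (W x y))) ->
  is_solution Om p q (fun x y => / sqrt (p x y) * Re (W x y)) /\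
  is_solution Om (fun x y => / p x y)
    (fun x y =>
       - (/ p x y) *
         (q x y / p x y
          + 2 * (dx p x y / p x y * (dx u0 x y / u0 x y)
                 + dy p x y / p x y * (dy u0 x y / u0 x y))
          + 2 * ((dx u0 x y / u0 x y) ^ 2 + (dy u0 x y / u0 x y) ^ 2)))
    (fun x y => sqrt (p x y) * Im (W x y)).
Proof.
intros [_ [Om_open _]] Cp p_pos Cu u0_pos Su CW1 CW2 HW. cbv zeta in HW.
assert (p_nz : forall x y, Om x y -> p x y <> 0) by (intros; now apply Rgt_not_eq, p_pos).
assert (u0_nz : forall x y, Om x y -> u0 x y <> 0) by (intros; now apply Rgt_not_eq, u0_pos).
assert (sqrt_p_nz : forall x y, Om x y -> sqrt (p x y) <> 0)
  by (intros; now apply Rgt_not_eq, sqrt_lt_R0, p_pos).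
assert (f_sqr : forall x y, Om x y -> (sqrt (p x y) * u0 x y) ^ 2 = p x y * u0 x y ^ 2)
  by (intros; rewrite Rpow_mult_distr, pow2_sqrt; [reflexivity | now apply Rlt_le, p_pos]).
destruct (is_solution_vekua_parts Om Om_open (fun x y => sqrt (p x y) * u0 x y)
  (fun x y => Re (W x y)) (fun x y => Im (W x y))) as (S1 & S2);
  try (now apply C2_on_mixed_partials); [intros; apply Rmult_integral_contrapositive; auto | | exact HW |].
{ apply mixed_partials_on_mult; [exact Om_open | | now apply C2_on_mixed_partials].
  apply mixed_partials_on_sqrt; [exact Om_open | exact p_pos | now apply C2_on_mixed_partials]. }
split.
- apply (is_solution_eq_on Om Om_open p q (fun x y => u0 x y * (Re (W x y) * / (sqrt (p x y) * u0 x y))));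
    [exact (fun _ _ _ => eq_refl) | exact (fun _ _ _ => eq_refl) | | ].
  { intros x y Hxy. field. auto. }
  apply is_solution_mul; [exact Om_open | exact u0_nz | exact Su |].
  exact (is_solution_eq_on Om Om_open _ _ _ _ _ _ f_sqr (fun _ _ _ => eq_refl) (fun _ _ _ => eq_refl) S1).
- apply (is_solution_eq_on Om Om_open (fun x y => / p x y) (dual_potential p q u0)
    (fun x y => / u0 x y * (sqrt (p x y) * u0 x y * Im (W x y))));
    [exact (fun _ _ _ => eq_refl) | exact (fun _ _ _ => eq_refl) | | ].
  { intros x y Hxy. field. auto. }
  apply is_solution_mul; [exact Om_open | intros; now apply Rinv_neq_0_compat, u0_nz | |].
  + apply is_solution_inv; [exact Om_open | exact p_nz | exact u0_nz | | exact Su].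
    intros x y Hxy. destruct (proj1 Cp x y Hxy) as (? & ? & _). now split.
  + refine (is_solution_eq_on Om Om_open _ _ _ _ _ _ _ (fun _ _ _ => eq_refl) (fun _ _ _ => eq_refl) S2).
    intros x y Hxy. cbv beta. rewrite f_sqr by exact Hxy. field. auto.
Qed.
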